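(* Consider an instance of the bicriteria asymmetric traveling salesman problem (bi-ATSP) with tour set $\mathcal{C}$, vector criterion $D=(D_1,D_2)$, outcome set $\mathcal{D}=D(\mathcal{C})$, and $\mathcal{D}_i=D_i(\mathcal{C})$ for $i=1,2$. Suppose that $$P(\mathcal{D}) = \bigcup_{i=1}^p \{ (y_1, y_2): y_2 = a_i - k y_1,\ y_1 \in \mathcal{D}_1,\ y_2 \in \mathcal{D}_2 \},$$ where $a_1,\dots,a_p>0$ and $k>0$ are constants. If criterion $D_1$ is more important than criterion $D_2$ with coefficient of relative importance $\theta'$ and $\theta' \geqslant k/(k+1)$ (and $\hat P(\mathcal{D})$ is the reduced Pareto set with $i=1$, $j=2$, $\theta=\theta'$), or criterion $D_2$ is more important than criterion $D_1$ with coefficient of relative importance $\theta''$ and $\theta'' \geqslant 1/(k+1)$ (and $\hat P(\mathcal{D})$ is the reduced Pareto set with $i=2$, $j=1$, $\theta=\theta''$), then $|\hat{P}(\mathcal{D})| \leqslant p$.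
   Context: Bi-ATSP: given a complete directed graph $G=(V,E)$ on $n$ vertices, each arc $e\in E$ carries a weight vector $d(e)=(d_1(e),d_2(e))$ of positive numbers. $\mathcal{C}$ is the set of all $(n-1)!$ Hamiltonian circuits (tours) of $G$, and for a tour $C$, $D(C)=(D_1(C),D_2(C))$ with $D_j(C)=\sum_{e\in C} d_j(e)$. For vectors $y^*,y$, write $y^*\leq y$ if $y^*\neq y$ and $y^*_s\leqslant y_s$ for every coordinate $s$ (Pareto relation). For a vector criterion $F$ on $\mathcal{C}$, the set of pareto-optimal tours is $P_F(\mathcal{C})=\{C\in\mathcal{C}: \nexists C^*\in\mathcal{C},\ F(C^* )\leq F(C)\}$. The Pareto set is $P(\mathcal{D})=\{y\in\mathcal{D}: \nexists y^*\in\mathcal{D},\ y^*\leq y\}$. Reduced Pareto set: if criterion $D_i$ is declared more important than criterion $D_j$ ($\{i,j\}=\{1,2\}$) with coefficient of relative importance $\theta\in(0,1)$, define the new criterion $\hat D$ by $\hat D_j=\theta D_i+(1-\theta)D_j$ and $\hat D_i=D_i$, and set $\hat{P}(\mathcal{D})=D(P_{\hat D}(\mathcal{C}))$ (a subset of $P(\mathcal{D})$). *)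

From HB Require Import structures.
From mathcomp Require Import all_boot all_order all_algebra all_fingroup.
Set Implicit Arguments. Unset Strict Implicit. Unset Printing Implicit Defensive.
Import Order.TTheory GRing.Theory Num.Theory.
Local Open Scope ring_scope.

Section BiATSP.
Variables (R : realFieldType) (n : nat).

(* A Hamiltonian circuit of the complete digraph on 'I_n is encoded by its
   successor permutation s: the tour uses the arcs (v, s v).  s is a tour
   iff it is a single cycle through all vertices without loops. *)
Definition is_tour (s : {perm 'I_n}) : bool :=
  [forall v, porbit s v == [set: 'I_n]] && [forall v, s v != v].

Definition tour_weight (d : 'I_n -> 'I_n -> R) (s : {perm 'I_n}) : R :=
  \sum_(v : 'I_n) d v (s v).

Definition pdom (y' y : R * R) : bool :=
  [&& y' != y, y'.1 <= y.1 & y'.2 <= y.2].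

Definition pareto_tours (F : {perm 'I_n} -> R * R) : pred {perm 'I_n} :=
  [pred C | is_tour C && ~~ [exists C', is_tour C' && pdom (F C') (F C)]].

Definition outcome (F : {perm 'I_n} -> R * R) (y : R * R) : Prop :=
  exists2 C, is_tour C & F C = y.

Definition pareto_set (F : {perm 'I_n} -> R * R) (y : R * R) : Prop :=
  outcome F y /\ ~ (exists y', outcome F y' /\ pdom y' y).

(* The image F'(S) of a set S of tours, as a duplicate-free list;
   its size is the cardinality. *)
Definition image_of (F' : {perm 'I_n} -> R * R) (S : pred {perm 'I_n}) : seq (R * R) :=
  undup [seq F' C | C <- enum S].

Definition critD (d1 d2 : 'I_n -> 'I_n -> R) (C : {perm 'I_n}) : R * R :=
  (tour_weight d1 C, tour_weight d2 C).

(* D_1 more important than D_2 with coefficient theta. *)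
Definition hatD12 d1 d2 (theta : R) (C : {perm 'I_n}) : R * R :=
  (tour_weight d1 C, theta * tour_weight d1 C + (1 - theta) * tour_weight d2 C).

(* D_2 more important than D_1 with coefficient theta. *)
Definition hatD21 d1 d2 (theta : R) (C : {perm 'I_n}) : R * R :=
  (theta * tour_weight d2 C + (1 - theta) * tour_weight d1 C, tour_weight d2 C).

Definition reduced12 d1 d2 theta : seq (R * R) :=
  image_of (critD d1 d2) (pareto_tours (hatD12 d1 d2 theta)).
Definition reduced21 d1 d2 theta : seq (R * R) :=
  image_of (critD d1 d2) (pareto_tours (hatD21 d1 d2 theta)).

End BiATSP.

From HB Require Import structures.
From mathcomp Require Import all_boot all_order all_algebra all_fingroup.
From mathcomp Require Import lra.
Set Implicit Arguments. Unset Strict Implicit. Unset Printing Implicit Defensive.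
Import Order.TTheory GRing.Theory Num.Theory.
Local Open Scope ring_scope.

(* The reduced criterion is [g \o D] for a linear map [g] that preserves the
   Pareto relation, so every reduced-Pareto tour is Pareto and its outcome lies
   on one of the p lines y2 = a_i - k y1.  Moving along such a line changes the
   second coordinate of [hat12 th y] by (th (k + 1) - k) times the change of the
   first one, so for th >= k / (k + 1) any two distinct points of the line have
   comparable images (symmetrically for [hat21] and th >= 1 / (k + 1)).  Hence
   each line carries at most one reduced-Pareto outcome. *)

Lemma uniq_leq_card_classes (T : eqType) (I : finType) (L : I -> pred T)
    (s : seq T) :
  uniq s -> (forall y, y \in s -> exists i, y \in L i) ->
  {in s &, forall y y' i, y \in L i -> y' \in L i -> y = y'} ->
  (size s <= #|I|)%N.
Proof.
case: s => [//|y0 s] us cover single.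
have [i0 _] := cover y0 (mem_head _ _).
pose f y := odflt i0 [pick i | y \in L i].
have fP y : y \in y0 :: s -> y \in L (f y).
  rewrite /f; case: pickP => [//|none] /cover [i]; by rewrite none.
have f_inj : {in y0 :: s &, injective f}.
  by move=> y y' ys y's fyy'; apply: single (fP y ys) _; rewrite // fyy' fP.
rewrite -(size_map f) -(card_uniqP _); last by rewrite map_inj_in_uniq.
exact: max_card.
Qed.

Section ReducedPareto.
Variables (R : realFieldType) (n : nat) (F : {perm 'I_n} -> R * R).

Lemma pareto_tour_outcome (C : {perm 'I_n}) :
  pareto_tours F C -> pareto_set F (F C).
Proof.
case/andP=> tC /existsPn noC; split; first by exists C.
by case=> _ [[C' tC' <-]] dom; have := noC C'; rewrite tC' dom.
Qed.

Lemma pareto_tours_comp (g : R * R -> R * R) (C : {perm 'I_n}) :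
  {homo g : y' y / pdom y' y} ->
  pareto_tours (g \o F) C -> pareto_tours F C.
Proof.
move=> g_homo /andP[tC /existsPn noC]; apply/andP; split=> //.
apply/existsPn=> C'; apply: contraNN (noC C') => /andP[tC' dom].
by rewrite tC' g_homo.
Qed.

Lemma pareto_tours_undominated (G : {perm 'I_n} -> R * R)
    (C C' : {perm 'I_n}) :
  is_tour C -> pareto_tours G C' -> ~~ pdom (G C) (G C').
Proof.
by move=> tC /andP[_ /existsPn /(_ C)]; rewrite tC.
Qed.

Lemma size_image_pareto_tours_comp (I : finType) (L : I -> pred (R * R))
    (g : R * R -> R * R) :
  {homo g : y' y / pdom y' y} ->
  (forall y, pareto_set F y -> exists i, y \in L i) ->
  (forall i y y', y \in L i -> y' \in L i -> y != y' ->
     pdom (g y) (g y') || pdom (g y') (g y)) ->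
  (size (image_of F (pareto_tours (g \o F))) <= #|I|)%N.
Proof.
move=> g_homo cover chain.
have memP y : y \in image_of F (pareto_tours (g \o F)) ->
    exists2 C, pareto_tours (g \o F) C & F C = y.
  by rewrite mem_undup => /mapP[C]; rewrite mem_enum => PC ->; exists C.
apply: uniq_leq_card_classes; first exact: undup_uniq.
  move=> y /memP[C PC <-]; apply/cover/pareto_tour_outcome.
  exact: pareto_tours_comp PC.
move=> y y' /memP[C PC <-] /memP[C' PC' <-] i Li Li'.
apply/eqP/contraT => /(chain i _ _ Li Li').
have /andP[tC _] := PC; have /andP[tC' _] := PC'.
by rewrite (negPf (pareto_tours_undominated tC PC'))
           (negPf (pareto_tours_undominated tC' PC)).
Qed.

End ReducedPareto.

Section ImportanceMaps.
Variable R : realFieldType.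
Implicit Types (th k a : R) (y : R * R).

Definition hat12 th y : R * R := (y.1, th * y.1 + (1 - th) * y.2).
Definition hat21 th y : R * R := (th * y.2 + (1 - th) * y.1, y.2).

Lemma pdomE (y' y : R * R) :
  pdom y' y =
  [&& ~~ ((y'.1 == y.1) && (y'.2 == y.2)), y'.1 <= y.1 & y'.2 <= y.2].
Proof. by case: y' y => [? ?] [? ?]; rewrite /pdom xpair_eqE. Qed.

Lemma pdom_or_of_le y y' : y != y' ->
  (y.1 <= y'.1) && (y.2 <= y'.2) || (y'.1 <= y.1) && (y'.2 <= y.2) ->
  pdom y y' || pdom y' y.
Proof. by move=> ne; rewrite /pdom ne eq_sym ne. Qed.

Lemma hat12_homo th : 0 <= th < 1 -> {homo hat12 th : y' y / pdom y' y}.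
Proof.
move=> /andP[th0 th1] [x1 x2] [z1 z2].
rewrite !pdomE /= => /and3P[ne le1 le2].
have nz : 1 - th != 0 by rewrite subr_eq0 gt_eqF.
apply/and3P; split=> //; last by nra.
apply: contra ne => /andP[/eqP e1 /eqP]; rewrite e1 => /addrI/(mulfI nz) ->.
by rewrite !eqxx.
Qed.

Lemma hat21_homo th : 0 <= th < 1 -> {homo hat21 th : y' y / pdom y' y}.
Proof.
move=> /andP[th0 th1] [x1 x2] [z1 z2].
rewrite !pdomE /= => /and3P[ne le1 le2].
have nz : 1 - th != 0 by rewrite subr_eq0 gt_eqF.
apply/and3P; split=> //; last by nra.
apply: contra ne => /andP[/eqP + /eqP e2]; rewrite e2 => /addrI/(mulfI nz) ->.
by rewrite !eqxx.
Qed.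

Lemma hat12_total_on_line th k a y y' : k <= th * (k + 1) ->
  y.2 = a - k * y.1 -> y'.2 = a - k * y'.1 -> y != y' ->
  pdom (hat12 th y) (hat12 th y') || pdom (hat12 th y') (hat12 th y).
Proof.
case: y y' => [x1 x2] [z1 z2] hth /= -> -> ne.
have ne1 : x1 != z1 by apply: contra ne => /eqP <-.
apply: pdom_or_of_le; rewrite /hat12 /=.
  by rewrite xpair_eqE negb_and ne1.
have [le|lt] := leP x1 z1.
- by apply/orP; left; nra.
- by rewrite (ltW lt) /=; nra.
Qed.

Lemma hat21_total_on_line th k a y y' : 0 < k -> 1 <= th * (k + 1) ->
  y.2 = a - k * y.1 -> y'.2 = a - k * y'.1 -> y != y' ->
  pdom (hat21 th y) (hat21 th y') || pdom (hat21 th y') (hat21 th y).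
Proof.
case: y y' => [x1 x2] [z1 z2] k0 hth /= -> -> ne.
have ne1 : x1 != z1 by apply: contra ne => /eqP <-.
apply: pdom_or_of_le; rewrite /hat21 /=.
  rewrite xpair_eqE negb_and orbC; apply/orP; left.
  by apply: contra ne1 => /eqP e; apply/eqP; nra.
have [le|lt] := leP x1 z1.
- by apply/orP; right; apply/andP; split; nra.
- by apply/orP; left; apply/andP; split; nra.
Qed.

End ImportanceMaps.

Theorem corollary1 (R : realFieldType) (n : nat)
  (d1 d2 : 'I_n -> 'I_n -> R)
  (hd1 : forall u v : 'I_n, u != v -> 0 < d1 u v)
  (hd2 : forall u v : 'I_n, u != v -> 0 < d2 u v)
  (p : nat) (a : 'I_p -> R) (k : R)
  (ha : forall i, 0 < a i) (hk : 0 < k)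
  (hP : forall y : R * R,
      pareto_set (critD d1 d2) y <->
      exists i : 'I_p,
        [/\ y.2 = a i - k * y.1,
            (exists2 C, is_tour C & tour_weight d1 C = y.1) &
            (exists2 C, is_tour C & tour_weight d2 C = y.2)]) :
  (forall theta' : R, 0 < theta' < 1 -> k / (k + 1) <= theta' ->
     (size (reduced12 d1 d2 theta') <= p)%N) /\
  (forall theta'' : R, 0 < theta'' < 1 -> 1 / (k + 1) <= theta'' ->
     (size (reduced21 d1 d2 theta'') <= p)%N).
Proof.
pose line i := [pred y : R * R | y.2 == a i - k * y.1].
have cover y : pareto_set (critD d1 d2) y -> exists i, y \in line i.
  by case/hP=> i [e _ _]; exists i; rewrite inE e.
have k1 : 0 < k + 1 by lra.
split=> th /andP[th0 th1]; rewrite ler_pdivrMr // -[p]card_ord => hth.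
- apply: (size_image_pareto_tours_comp (g := hat12 th) _ cover).
    by apply: hat12_homo; rewrite ltW.
  move=> i y y'; rewrite !inE => /eqP e /eqP e'.
  exact: hat12_total_on_line hth e e'.
- apply: (size_image_pareto_tours_comp (g := hat21 th) _ cover).
    by apply: hat21_homo; rewrite ltW.
  move=> i y y'; rewrite !inE => /eqP e /eqP e'.
  exact: hat21_total_on_line hk hth e e'.
Qed.
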